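(* Assume $0<\nu<1$, $\mathbf{x}_E(t_0)\neq\mathbf{x}_P(t_0)$, $\delta>0$, and the pursuer uses the law $\mathbf{v}_P=\mathbf{z}_P/\|\mathbf{z}_P\|$ with $\mathbf{z}_P(t)=(R_{\mathcal C}-R_{\mathcal A}(t))\,\mathbf{r}(t)/\|\mathbf{r}(t)\|+\nu\mathbf{y}(t)$. Then for every admissible evader control and every $t>t_0$ (up to capture), $\|\mathbf{r}(t)\|<\|\mathbf{r}(t_0)\|$. In particular, if the pursuer can sense the evader whenever their distance is at most $\rho$, with $\rho\ge\|\mathbf{r}(t_0)\|$, then the evader remains within sensing range until capture.
   Context: Setting (simple-motion pursuit–evasion in the plane). An evader and a pursuer have positions $\mathbf{x}_E(t),\mathbf{x}_P(t)\in\mathbb R^2$ with dynamics $\dot{\mathbf{x}}_E=\mathbf{v}_E$, $\dot{\mathbf{x}}_P=\mathbf{v}_P$, where $\|\mathbf{v}_E\|\le\nu$, $\|\mathbf{v}_P\|\le 1$, $0\le\nu<1$. The game starts at $t_0$ and ends at capture, the first time $\mathbf{x}_P=\mathbf{x}_E$. Set $\alpha=1/(1-\nu^2)$, $\gamma=\nu\alpha$, $\beta=\nu^2\alpha$, $\mathbf{r}=\mathbf{x}_E-\mathbf{x}_P$. The Apollonius disc $\mathcal A(t)$ is the closed disc with center $\mathbf{x}_{\mathcal A}(t)=\alpha\mathbf{x}_E(t)-\beta\mathbf{x}_P(t)$ and radius $R_{\mathcal A}(t)=\gamma\|\mathbf{r}(t)\|$. Given $\delta>0$, $\mathcal C$ is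 the closed disc with center $\mathbf{x}_{\mathcal C}=\mathbf{x}_{\mathcal A}(t_0)$ and radius $R_{\mathcal C}=R_{\mathcal A}(t_0)+\delta$; $\mathbf{y}(t)=\mathbf{x}_{\mathcal A}(t)-\mathbf{x}_{\mathcal C}$. *)

From HB Require Import structures.
From mathcomp Require Import all_boot all_order all_algebra.
From mathcomp Require Import all_classical all_reals all_analysis.
Set Implicit Arguments. Unset Strict Implicit. Unset Printing Implicit Defensive.
Import Order.TTheory GRing.Theory Num.Theory.
Import numFieldNormedType.Exports.
Local Open Scope classical_set_scope.
Local Open Scope ring_scope.

Section Pursuit.
Variable R : realType.

Definition enorm (p : R * R) : R := Num.sqrt (p.1 ^+ 2 + p.2 ^+ 2).
Definition psub (p q : R * R) : R * R := (p.1 - q.1, p.2 - q.2).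

Definition alpha (nu : R) : R := (1 - nu ^+ 2)^-1.
Definition gamma (nu : R) : R := nu * alpha nu.
Definition beta (nu : R) : R := nu ^+ 2 * alpha nu.

Definition apollo_center (nu : R) (xE xP : R * R) : R * R :=
  (alpha nu * xE.1 - beta nu * xP.1, alpha nu * xE.2 - beta nu * xP.2).
Definition apollo_radius (nu : R) (xE xP : R * R) : R :=
  gamma nu * enorm (psub xE xP).

Definition zP (nu delta : R) (xE0 xP0 xE xP : R * R) : R * R :=
  let RC := apollo_radius nu xE0 xP0 + delta in
  let r := psub xE xP in
  let y := psub (apollo_center nu xE xP) (apollo_center nu xE0 xP0) in
  let c := (RC - apollo_radius nu xE xP) / enorm r in
  (c * r.1 + nu * y.1, c * r.2 + nu * y.2).

Definition vP_law (nu delta : R) (xE0 xP0 xE xP : R * R) : R * R :=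
  let z := zP nu delta xE0 xP0 xE xP in (z.1 / enorm z, z.2 / enorm z).

Definition integral_traj (x v : R -> R * R) (t0 t : R) : Prop :=
  (x t).1 = (x t0).1 + \int[@lebesgue_measure R]_(s in `[t0, t]) (v s).1 /\
  (x t).2 = (x t0).2 + \int[@lebesgue_measure R]_(s in `[t0, t]) (v s).2.

End Pursuit.

From HB Require Import structures.
From mathcomp Require Import all_boot all_order all_algebra.
From mathcomp Require Import all_classical all_reals all_analysis.
From mathcomp Require Import ring lra.
Import Order.TTheory GRing.Theory Num.Theory.
Import numFieldNormedType.Exports.
Local Open Scope classical_set_scope.
Local Open Scope ring_scope.
Set Implicit Arguments. Unset Strict Implicit. Unset Printing Implicit Defensive.

(* Let y be the drift of the Apollonius centre and a = R_C - R_A the slack between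
   the radii; G = |y|^2 - a^2 < 0 says that the Apollonius disc lies inside C, and
   G starts at -delta^2.  To first order
   dG/dt = 2 alpha <p, v_E> - 2 gamma <z_P, v_P> with p = y + nu (a / |r|) r, and
   |p|^2 - |z_P|^2 = (1 - nu^2) G, so as long as G < 0 the pursuer's law v_P = z_P/|z_P|
   beats every admissible evader and G strictly decreases.  Hence a(t) > delta for
   t > t0, which is gamma |r(t)| < gamma |r(t0)|.  The trajectories are only integrals
   of measurable controls, so instead of differentiating G the monotonicity is proved
   by real induction on [t0, T], from one-step increment estimates. *)

Section PlaneVectors.
Variable R : realType.
Implicit Types (p q : R * R) (c : R).

Definition dot p q : R := p.1 * q.1 + p.2 * q.2.
Definition vadd p q : R * R := (p.1 + q.1, p.2 + q.2).
Definition vscl c p : R * R := (c * p.1, c * p.2).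
(* [unit_dir (0, 0) = (0, 0)], as [0^-1 = 0]. *)
Definition unit_dir p : R * R := vscl (enorm p)^-1 p.

Lemma enorm_ge0 p : 0 <= enorm p.
Proof. exact: sqrtr_ge0. Qed.

Lemma enorm_sqr p : enorm p ^+ 2 = p.1 ^+ 2 + p.2 ^+ 2.
Proof. by rewrite sqr_sqrtr // addr_ge0 // sqr_ge0. Qed.

Lemma enorm_le_sqr p c : 0 <= c -> (enorm p <= c) = (p.1 ^+ 2 + p.2 ^+ 2 <= c ^+ 2).
Proof. by move=> c0; rewrite -enorm_sqr ler_pXn2r // ?nnegrE ?enorm_ge0. Qed.

Lemma enorm_sqr_le p c : enorm p <= c -> enorm p ^+ 2 <= c ^+ 2.
Proof. by have := enorm_ge0 p; rewrite !expr2; nra. Qed.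

Lemma enorm_eq0 p : (enorm p == 0) = (p == (0, 0)).
Proof.
rewrite /enorm sqrtr_eq0 le_eqVlt ltNge addr_ge0 ?sqr_ge0 // orbF.
by rewrite paddr_eq0 ?sqr_ge0 // !sqrf_eq0; case: p => a b; rewrite xpair_eqE.
Qed.

Lemma enorm_psubC p q : enorm (psub p q) = enorm (psub q p).
Proof. by rewrite /enorm /psub /=; congr Num.sqrt; ring. Qed.

Lemma normr_fst_le p : `|p.1| <= enorm p.
Proof. by rewrite /enorm -sqrtr_sqr ler_sqrt ?addr_ge0 ?sqr_ge0 // lerDl sqr_ge0. Qed.

Lemma normr_snd_le p : `|p.2| <= enorm p.
Proof. by rewrite /enorm -sqrtr_sqr ler_sqrt ?addr_ge0 ?sqr_ge0 // lerDr sqr_ge0. Qed.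

Lemma dot_le p q : dot p q <= enorm p * enorm q.
Proof.
rewrite /enorm -sqrtrM ?addr_ge0 ?sqr_ge0 //; apply: (le_trans (ler_norm _)).
rewrite -(sqrtr_sqr (dot p q)) ler_sqrt ?mulr_ge0 ?addr_ge0 ?sqr_ge0 //.
have := sqr_ge0 (p.1 * q.2 - p.2 * q.1); rewrite /dot; nra.
Qed.

Lemma normr_dot_le p q : `|dot p q| <= enorm p * enorm q.
Proof.
have := dot_le (vscl (-1) p) q; rewrite /enorm /vscl /dot /= !mulN1r !sqrrN !mulNr.
by have := dot_le p q; rewrite /dot /enorm ler_norml => h1 h2; apply/andP; split; lra.
Qed.

Lemma enorm_le_dual p c : 0 <= c -> (forall q, dot q p <= enorm q * c) -> enorm p <= c.
Proof.
move=> c0 /(_ p); have -> : dot p p = enorm p * enorm p.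
  by rewrite -expr2 enorm_sqr /dot !expr2.
have [->|pn0] := eqVneq (enorm p) 0; first by [].
by rewrite ler_pM2l // lt_def pn0 enorm_ge0.
Qed.

Lemma enorm_vscl c p : enorm (vscl c p) = `|c| * enorm p.
Proof. by rewrite /enorm /vscl /= !exprMn -mulrDr sqrtrM ?sqr_ge0 // sqrtr_sqr. Qed.

Lemma enorm_vadd_le p q : enorm (vadd p q) <= enorm p + enorm q.
Proof.
rewrite enorm_le_sqr ?addr_ge0 ?enorm_ge0 //; rewrite (sqrrD (enorm p)) !enorm_sqr.
by have := dot_le p q; rewrite /dot /vadd /=; nra.
Qed.

Lemma enorm_psub_ge p q : enorm p - enorm q <= enorm (psub p q).
Proof.
have := enorm_vadd_le q (psub p q).
have -> : vadd q (psub p q) = p by case: p => a b; rewrite /vadd /psub /=; congr pair; ring.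
lra.
Qed.

Lemma enorm_vlin_le a b p q :
  enorm (vadd (vscl a p) (vscl b q)) <= `|a| * enorm p + `|b| * enorm q.
Proof. by rewrite -!enorm_vscl; apply: enorm_vadd_le. Qed.

Lemma enorm_psub_psub_le p q p' q' :
  enorm (psub (psub p' q') (psub p q)) <= enorm (psub p' p) + enorm (psub q' q).
Proof.
have := enorm_vlin_le 1 (-1) (psub p' p) (psub q' q); rewrite normrN normr1 !mul1r.
congr (enorm _ <= _); rewrite /vadd /vscl /psub /=; congr pair; ring.
Qed.

Lemma vscl_enorm_unit_dir p : vscl (enorm p) (unit_dir p) = p.
Proof.
have [/eqP|p0] := eqVneq (enorm p) 0.
  by rewrite enorm_eq0 => /eqP ->; rewrite /unit_dir /vscl /= !mulr0.
by case: p p0 => a b p0; rewrite /unit_dir /vscl /= !mulrA mulfV // !mul1r.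
Qed.

Lemma enorm_unit_dir_le1 p : enorm (unit_dir p) <= 1.
Proof.
rewrite enorm_vscl normfV ger0_norm ?enorm_ge0 //.
by have [->|p0] := eqVneq (enorm p) 0; [rewrite mulr0 | rewrite mulVf].
Qed.

Lemma dot_unit_dir p : dot p (unit_dir p) = enorm p.
Proof.
have [p0|p0] := eqVneq (enorm p) 0.
  by rewrite /dot /unit_dir /vscl /= p0 invr0 !mul0r !mulr0 addr0.
rewrite /dot /unit_dir /vscl /= mulrCA [p.2 * _]mulrCA -mulrDr -!expr2.
by rewrite -enorm_sqr expr2 mulKf.
Qed.

(* Moving the base point from [z] to [q] costs at most [|q - z|] twice: once in
   [dot _ (unit_dir z)] and once in comparing [|z|] with [|q|]. *)
Lemma dot_unit_dir_ge q z : enorm q - 2 * enorm (psub q z) <= dot q (unit_dir z).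
Proof.
have -> : dot q (unit_dir z) = dot z (unit_dir z) + dot (psub q z) (unit_dir z).
  by rewrite /dot /psub /=; ring.
rewrite dot_unit_dir.
have := normr_dot_le (psub q z) (unit_dir z); rewrite ler_norml => /andP[+ _].
have := ler_wpM2l (enorm_ge0 (psub q z)) (enorm_unit_dir_le1 z); rewrite mulr1.
by have := enorm_psub_ge q z; lra.
Qed.

Lemma unit_dir_lipschitz r r' : 0 < enorm r ->
  enorm (psub (unit_dir r') (unit_dir r)) <= 2 * enorm (psub r' r) / enorm r.
Proof.
move=> r0.
have -> : psub (unit_dir r') (unit_dir r) =
    vadd (vscl (enorm r)^-1 (psub r' r)) (vscl ((enorm r - enorm r') / enorm r) (unit_dir r')).
  have e := vscl_enorm_unit_dir r'.
  set u' := unit_dir r' in e *; set n' := enorm r' in e *; clearbody u' n'; rewrite -e.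
  by rewrite /psub /vadd /vscl /=; congr pair; field; rewrite gt_eqF.
apply: le_trans (enorm_vlin_le _ _ _ _) _.
rewrite normrM !normfV (gtr0_norm r0).
have dr : `|enorm r - enorm r'| <= enorm (psub r' r).
  rewrite ler_norml (enorm_psubC r'); have := enorm_psub_ge r r'.
  by have := enorm_psub_ge r' r; rewrite (enorm_psubC r') => h1 h2; apply/andP; split; lra.
have : `|enorm r - enorm r'| * enorm (unit_dir r') <= enorm (psub r' r).
  rewrite -[X in _ <= X]mulr1; apply: ler_pM => //; [exact: enorm_ge0 | exact: enorm_unit_dir_le1].
have ir0 : 0 <= (enorm r)^-1 by rewrite invr_ge0 ltW.
by move/(ler_wpM2r ir0); rewrite mulrAC; lra.
Qed.

End PlaneVectors.

Section Integrals.
Variable R : realType.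
Local Notation mu := (@lebesgue_measure R).

Lemma integrable_bounded (A : set R) (f : R -> R) (B : R) :
  measurable A -> (mu A < +oo)%E -> measurable_fun A f ->
  (forall x, A x -> `|f x| <= B) -> mu.-integrable A (EFin \o f).
Proof.
move=> mA Afin mf fB; apply: measurable_bounded_integrable => //.
rewrite /bounded_near; near=> M => x Ax /=.
apply: (le_trans (fB x Ax)); near: M; exact: nbhs_pinfty_ge (num_real _).
Unshelve. all: by end_near. Qed.

Lemma lebesgue_itv_lty (b1 b2 : bool) (a b : R) :
  (mu [set` Interval (BSide b1 a) (BSide b2 b)] < +oo)%E.
Proof. by rewrite lebesgue_measure_itv /=; case: ifP => _; rewrite ?ltry. Qed.

Lemma Rintegral_increment_le (t0 s u M B : R) (f : R -> R) :
  t0 <= s -> s < u -> measurable_fun `[t0, u] f ->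
  (forall x, t0 <= x <= u -> `|f x| <= B) ->
  (forall x, s < x <= u -> f x <= M) ->
  \int[mu]_(x in `[t0, u]) f x - \int[mu]_(x in `[t0, s]) f x <= M * (u - s).
Proof.
move=> t0s su mf fB fM.
have If : mu.-integrable `[t0, u] (EFin \o f).
  apply: (integrable_bounded _ (lebesgue_itv_lty _ _ _ _) mf) => //.
  by move=> x; rewrite /= in_itv; apply: fB.
rewrite Rintegral_itvB //; last by rewrite bnd_simp ltW.
have Ifs : mu.-integrable `]s, u] (EFin \o f).
  by apply: integrableS If => //; apply: subset_itvr; rewrite bnd_simp.
have IM : mu.-integrable `]s, u] (EFin \o cst M).
  exact: (integrable_bounded _ (lebesgue_itv_lty _ _ _ _) (measurable_cst _) (B := `|M|)).
apply: (@le_trans _ _ (\int[mu]_(x in `]s, u]) cst M x)).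
  by apply: le_Rintegral => // x; rewrite /= in_itv /=; apply: fM.
rewrite Rintegral_cst; last exact: measurable_itv.
have mE : mu `]s, u] = (u - s)%:E.
  by rewrite lebesgue_measure_itv /= lte_fin su /= EFinB.
by rewrite -[u - s]/(fine (u - s)%:E) -mE.
Qed.

Lemma measurable_fun_dot (A : set R) (p : R * R) (v : R -> R * R) :
  measurable A -> measurable_fun A (fun y => (v y).1) ->
  measurable_fun A (fun y => (v y).2) -> measurable_fun A (fun y => dot p (v y)).
Proof.
move=> mA m1 m2; rewrite /dot.
by apply: measurable_realfun.measurable_funD;
  apply: measurable_realfun.measurable_funM => //; exact: measurable_cst.
Qed.

Section Trajectory.
Variables (x v : R -> R * R) (t0 T B : R).
Hypotheses (mv1 : measurable_fun `[t0, T] (fun s => (v s).1))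
  (mv2 : measurable_fun `[t0, T] (fun s => (v s).2))
  (vB : forall s, t0 <= s <= T -> enorm (v s) <= B)
  (xv : forall t, t0 <= t <= T -> integral_traj x v t0 t).

Let measurable_fun_prefix (f : R -> R) w : w <= T ->
  measurable_fun `[t0, T] f -> measurable_fun `[t0, w] f.
Proof.
move=> wT; apply: measurable_funS; first exact: measurable_itv.
by apply: subset_itvl; rewrite bnd_simp.
Qed.

Lemma dot_traj p w : t0 <= w <= T ->
  dot p (x w) = dot p (x t0) + \int[mu]_(y in `[t0, w]) dot p (v y).
Proof.
move=> /[dup] hw /andP[t0w wT]; rewrite {1}/dot; have [-> ->] := xv hw.
have mI : measurable `[t0, w] by exact: measurable_itv.
have Iv (c : R) (f : R -> R) : measurable_fun `[t0, T] f ->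
    (forall y, `|f y| <= enorm (v y)) -> mu.-integrable `[t0, w] (EFin \o (fun y => c * f y)).
  move=> mf fv; apply: (integrable_bounded mI (lebesgue_itv_lty _ _ _ _) (B := `|c| * B)).
    apply: (@measurable_realfun.measurable_funM _ _ _ _ (fun=> c) f).
      exact: measurable_cst.
    exact: measurable_fun_prefix wT mf.
  move=> y; rewrite /= in_itv /= => /andP[t0y yw]; rewrite normrM ler_wpM2l //.
  by apply: le_trans (fv y) (vB _); rewrite t0y (le_trans yw wT).
have I1 c := Iv c _ mv1 (fun y => normr_fst_le (v y)).
have I2 c := Iv c _ mv2 (fun y => normr_snd_le (v y)).
have J1 := I1 1; have J2 := I2 1.
have e1 : (fun y => 1 * (v y).1) = (fun y => (v y).1) by apply/funext => y; rewrite mul1r.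
have e2 : (fun y => 1 * (v y).2) = (fun y => (v y).2) by apply/funext => y; rewrite mul1r.
rewrite {}e1 in J1; rewrite {}e2 in J2.
by rewrite /dot RintegralD // !RintegralZl //; ring.
Qed.

Lemma traj_dot_increment_le p s u M : t0 <= s -> s < u -> u <= T ->
  (forall y, s < y <= u -> dot p (v y) <= M) -> dot p (psub (x u) (x s)) <= M * (u - s).
Proof.
move=> t0s su uT vM; have t0u := le_trans t0s (ltW su).
have -> : dot p (psub (x u) (x s)) = dot p (x u) - dot p (x s) by rewrite /dot /psub /=; ring.
rewrite (dot_traj p (w := u)) ?t0u // (dot_traj p (w := s)) ?t0s ?(le_trans (ltW su)) //.
rewrite opprD addrACA subrr add0r; apply: (Rintegral_increment_le (B := enorm p * B)) => //.
  apply: measurable_fun_dot; first exact: measurable_itv.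
    exact: measurable_fun_prefix uT mv1.
  exact: measurable_fun_prefix uT mv2.
move=> y /andP[t0y yu]; apply: le_trans (normr_dot_le _ _) _.
rewrite ler_wpM2l ?enorm_ge0 //.
by apply: vB; rewrite t0y (le_trans yu uT).
Qed.

Lemma traj_dot_increment_ge p s u m : t0 <= s -> s < u -> u <= T ->
  (forall y, s < y <= u -> m <= dot p (v y)) -> m * (u - s) <= dot p (psub (x u) (x s)).
Proof.
move=> t0s su uT vm; have dotN w : dot (vscl (-1) p) w = - dot p w.
  by rewrite /dot /vscl /=; ring.
have := traj_dot_increment_le (M := - m) (p := vscl (-1) p) t0s su uT.
by rewrite dotN mulNr lerN2; apply=> y /vm; rewrite dotN lerN2.
Qed.

Lemma traj_increment_le s u : t0 <= s -> s < u -> u <= T ->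
  enorm (psub (x u) (x s)) <= B * (u - s).
Proof.
move=> t0s su uT; have t0T := le_trans t0s (ltW (lt_le_trans su uT)).
have B0 : 0 <= B by apply: le_trans (enorm_ge0 _) (vB (s := t0) _); rewrite lexx t0T.
apply: enorm_le_dual; first by rewrite mulr_ge0 // subr_ge0 ltW.
move=> q; rewrite mulrA; apply: traj_dot_increment_le => // y /andP[sy yu].
apply: le_trans (dot_le _ _) _; rewrite ler_wpM2l ?enorm_ge0 //.
by apply: vB; rewrite (le_trans t0s (ltW sy)) (le_trans yu uT).
Qed.

End Trajectory.
End Integrals.

Section RealInduction.
Variable R : realType.

Lemma real_induction (t0 T : R) (P : R -> Prop) : t0 <= T -> P t0 ->
  (forall s, t0 <= s < T -> P s ->
     exists2 e, 0 < e & forall u, s < u <= T -> u - s < e -> P u) ->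
  (forall s, t0 < s <= T -> (forall u, t0 <= u < s -> P u) -> P s) ->
  forall t, t0 <= t <= T -> P t.
Proof.
move=> t0T P0 step closed.
pose S := [set x | t0 <= x <= T /\ forall u, t0 <= u <= x -> P u].
(* [closed] puts [sup S] in [S], and then [step] rules out [sup S < T]. *)
have S0 : S t0.
  split=> [|u /andP[t0u ut0]]; first by rewrite lexx.
  by have -> : u = t0 by apply/eqP; rewrite eq_le ut0.
have ubS : ubound S T by move=> x [/andP[_ ->]].
pose c := sup S.
have t0c : t0 <= c by apply: ub_le_sup; first by exists T.
have cT : c <= T by apply: ge_sup; first by exists t0.
have below u : t0 <= u < c -> P u.
  move=> /andP[t0u uc]; have [x [_ Px] ux] := sup_gt (ex_intro _ t0 S0) uc.
  by apply: Px; rewrite t0u ltW.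
have Sc : S c.
  have Pc : P c.
    have [->|ct0] := eqVneq c t0; first exact: P0.
    by apply: closed => //; rewrite cT andbT lt_neqAle eq_sym ct0.
  split=> [|u /andP[t0u uc]]; first by rewrite t0c.
  by have [->|uc'] := eqVneq u c; last by apply: below; rewrite t0u lt_neqAle uc' uc.
suff -> : T = c by move=> t ht; apply: Sc.2.
apply/eqP; rewrite eq_le cT andbT leNgt; apply/negP => cT'.
have [e e0 Pe] := step c ltac:(by rewrite t0c cT') (Sc.2 c ltac:(by rewrite t0c lexx)).
pose x := Num.min (c + e / 2) T.
have cx : c < x by rewrite lt_min cT' andbT; lra.
have Sx : S x.
  split=> [|u /andP[t0u ux]]; first by rewrite (le_trans t0c (ltW cx)) ge_min lexx orbT.
  have [uc|cu] := leP u c; first by apply: Sc.2; rewrite t0u.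
  have xe : x <= c + e / 2 by rewrite ge_min lexx.
  have xT : x <= T by rewrite ge_min lexx orbT.
  by apply: Pe; rewrite ?cu /=; lra.
by have := ub_le_sup (ex_intro _ T ubS) Sx; rewrite -/c; lra.
Qed.

Lemma left_lipschitz_ub (f : R -> R) (t0 s c M : R) : t0 < s ->
  (forall u, t0 <= u < s -> s - u <= 1 -> f s - f u <= M * (s - u)) ->
  (forall u, t0 <= u < s -> f u <= c) -> f s <= c.
Proof.
move=> t0s fM fc; apply/ler_addgt0Pr => e e0.
have M1 : 0 < `|M| + 1 by rewrite ltr_pwDr ?normr_ge0.
pose k := Num.min (Num.min ((s - t0) / 2) 1) (e / (`|M| + 1)).
have k0 : 0 < k.
  by rewrite !lt_min ltr01 andbT; apply/andP; split; apply: divr_gt0; lra.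
have k1 : k <= (s - t0) / 2 by rewrite !ge_min lexx.
have k2 : k <= 1 by rewrite !ge_min lexx orbT.
have k3 : (`|M| + 1) * k <= e.
  by rewrite mulrC -ler_pdivlMr // ge_min lexx orbT.
have hu : t0 <= s - k < s by apply/andP; split; lra.
have := fM _ hu; rewrite (_ : s - (s - k) = k); last by ring.
move=> /(_ k2); have := fc _ hu.
have : M * k <= `|M| * k by apply: ler_wpM2r; [exact: ltW | exact: ler_norm].
lra.
Qed.

Lemma linear_lt_near0 (c A : R) : 0 < A ->
  exists2 e, 0 < e & forall h, 0 <= h -> h < e -> c * h < A.
Proof.
move=> A0; have c1 : 0 < `|c| + 1 by rewrite ltr_pwDr ?normr_ge0.
exists (A / (`|c| + 1)) => [|h h0 he]; first exact: divr_gt0.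
apply: le_lt_trans (ler_wpM2r h0 (ler_norm c)) _.
apply: le_lt_trans (_ : `|c| * h <= (`|c| + 1) * h) _; first by rewrite ler_wpM2r // lerDl.
by rewrite mulrC -ltr_pdivlMr.
Qed.

End RealInduction.

Lemma slack_sqr_ge (R : realType) (c g rho rho' : R) :
  0 < rho -> 0 <= rho' -> 0 <= g ->
  g * (rho' ^+ 2 - rho ^+ 2) / (2 * rho) <= c - g * rho ->
  0 <= c - g * rho' /\
  (c - g * rho) ^+ 2 - (c - g * rho) * g * (rho' ^+ 2 - rho ^+ 2) / rho <= (c - g * rho') ^+ 2.
Proof.
move=> rho0 rho'0 g0.
have tangent : rho' <= rho + (rho' ^+ 2 - rho ^+ 2) / (2 * rho).
  have -> : rho + (rho' ^+ 2 - rho ^+ 2) / (2 * rho) = (rho ^+ 2 + rho' ^+ 2) / (2 * rho).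
    by field; lra.
  by rewrite ler_pdivlMr; [have := sqr_ge0 (rho - rho'); rewrite !expr2; lra | lra].
move: tangent; set D := _ - _; clearbody D => tangent small.
have lower : c - g * rho - g * D / (2 * rho) <= c - g * rho'.
  by have := ler_wpM2l g0 tangent; rewrite mulrDr mulrA; lra.
split; first lra.
apply: le_trans (_ : (c - g * rho - g * D / (2 * rho)) ^+ 2 <= _).
  have -> : (c - g * rho - g * D / (2 * rho)) ^+ 2 =
    (c - g * rho) ^+ 2 - (c - g * rho) * g * D / rho + (g * D / (2 * rho)) ^+ 2.
    by field; lra.
  by have := sqr_ge0 (g * D / (2 * rho)); lra.
by rewrite ler_pXn2r // ?nnegrE; lra.
Qed.

Section Apollonius.
Variable R : realType.
Variables (nu delta : R) (E0 P0 : R * R).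
Hypotheses (nu0 : 0 < nu) (nu1 : nu < 1) (delta0 : 0 < delta).
Implicit Types (E P : R * R).

Local Notation al := (alpha nu).
Local Notation ga := (gamma nu).
Local Notation be := (beta nu).

Definition radiusC := apollo_radius nu E0 P0 + delta.
Definition ydev E P := psub (apollo_center nu E P) (apollo_center nu E0 P0).
Definition slack E P := radiusC - apollo_radius nu E P.
Definition lyap E P := enorm (ydev E P) ^+ 2 - slack E P ^+ 2.
Definition zPat E P := zP nu delta E0 P0 E P.
Definition evader_dir E P :=
  vadd (ydev E P) (vscl (nu * (slack E P / enorm (psub E P))) (psub E P)).
Definition zP_lip_const E P := (2 * radiusC / enorm (psub E P) + ga) * (1 + nu) + nu * (al + be).

Lemma alpha_gt0 : 0 < al.
Proof. by rewrite /alpha invr_gt0 subr_gt0 expr2; have := nu0; have := nu1; nra. Qed.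

Lemma gamma_gt0 : 0 < ga.
Proof. exact: mulr_gt0 nu0 alpha_gt0. Qed.

Lemma beta_ge0 : 0 <= be.
Proof. by rewrite /beta mulr_ge0 ?sqr_ge0 ?ltW ?alpha_gt0. Qed.

Lemma slackE E P : slack E P = radiusC - ga * enorm (psub E P).
Proof. by []. Qed.

Lemma radiusC_gt0 : 0 < radiusC.
Proof.
have d0 := delta0; have := mulr_ge0 (ltW gamma_gt0) (enorm_ge0 (psub E0 P0)).
by rewrite /radiusC /apollo_radius; lra.
Qed.

Lemma zP_lip_const_ge0 E P : 0 < enorm (psub E P) -> 0 <= zP_lip_const E P.
Proof.
move=> r0; have := radiusC_gt0; have := gamma_gt0; have := alpha_gt0.
have := beta_ge0; have := nu0 => n0 b0 a0 g0 c0.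
rewrite /zP_lip_const; apply: addr_ge0; apply: mulr_ge0; try lra.
by apply: addr_ge0; [apply: divr_ge0|]; lra.
Qed.

Lemma lyap_ge E P : - slack E P ^+ 2 <= lyap E P.
Proof. by rewrite /lyap lerBrDr addrC subrr sqr_ge0. Qed.

Lemma zPatE E P :
  zPat E P = vadd (vadd (vscl radiusC (unit_dir (psub E P))) (vscl (- ga) (psub E P)))
                  (vscl nu (ydev E P)).
Proof.
rewrite /zPat /zP /vadd /unit_dir /vscl /= -/radiusC -/(ydev E P) /apollo_radius.
have [/eqP|r0] := eqVneq (enorm (psub E P)) 0.
  by rewrite enorm_eq0 => /eqP[e1 e2]; rewrite e1 e2 !mulr0 !add0r.
by congr pair; field.
Qed.

Lemma ydev_increment E P E' P' :
  psub (ydev E' P') (ydev E P) = vadd (vscl al (psub E' E)) (vscl (- be) (psub P' P)).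
Proof. by rewrite /ydev /apollo_center /psub /vadd /vscl /=; congr pair; ring. Qed.

(* The first-order part of the increment of [lyap]; [gamma = nu alpha] and
   [beta = nu^2 alpha] make it split into an evader and a pursuer term. *)
Lemma lyap_first_order E P E' P' :
  2 * dot (ydev E P) (psub (ydev E' P') (ydev E P))
  + 2 * ga * (slack E P / enorm (psub E P)) * dot (psub E P) (psub (psub E' P') (psub E P)) =
  2 * al * dot (evader_dir E P) (psub E' E) - 2 * ga * dot (zPat E P) (psub P' P).
Proof.
rewrite /evader_dir /zPat /zP /ydev /slack /radiusC /apollo_center /dot /psub /vadd /vscl.
by rewrite /gamma /beta /=; ring.
Qed.

Lemma evader_dir_zP_sqr E P : 0 < enorm (psub E P) ->
  enorm (evader_dir E P) ^+ 2 - enorm (zPat E P) ^+ 2 = (1 - nu ^+ 2) * lyap E P.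
Proof.
move=> r0; rewrite /lyap /evader_dir.
have -> : zPat E P = vadd (vscl (slack E P / enorm (psub E P)) (psub E P)) (vscl nu (ydev E P)).
  by [].
set c := slack E P / enorm (psub E P).
have -> : slack E P = c * enorm (psub E P) by rewrite divfK ?gt_eqF.
clearbody c.
by rewrite exprMn !enorm_sqr /vadd /vscl /=; ring.
Qed.

Definition lyap_lip_const E P :=
  2 * enorm (ydev E P) * (al + be) + 2 * `|slack E P| * (ga * (1 + nu)) + (ga * (1 + nu)) ^+ 2.
Definition lyap_err_const E P := 4 * ga * zP_lip_const E P + (al + be) ^+ 2
  + slack E P * ga * (1 + nu) ^+ 2 / enorm (psub E P).

Definition slack_margin E P :=
  ga * (2 * enorm (psub E P) * (1 + nu) + (1 + nu) ^+ 2) / (2 * enorm (psub E P)).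

Lemma slack_gt0 E P : lyap E P < 0 -> 0 <= slack E P -> 0 < slack E P.
Proof.
move=> G0 a0; rewrite lt_def a0 andbT; apply: contraTneq G0 => a00.
by have := lyap_ge E P; rewrite a00 expr2 mulr0 oppr0 -leNgt.
Qed.

Lemma evader_dir_lt_zP E P : 0 < enorm (psub E P) -> lyap E P < 0 ->
  enorm (evader_dir E P) < enorm (zPat E P).
Proof.
move=> r0 G0; have := evader_dir_zP_sqr r0.
have n2 : 0 < 1 - nu ^+ 2 by rewrite subr_gt0 expr2; have := nu0; have := nu1; nra.
move=> e; have : enorm (evader_dir E P) ^+ 2 < enorm (zPat E P) ^+ 2 by nra.
by rewrite ltr_pXn2r // ?nnegrE ?enorm_ge0.
Qed.

Section Step.
Variables (E P E' P' : R * R) (h : R).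
Hypotheses (hE : enorm (psub E' E) <= nu * h) (hP : enorm (psub P' P) <= h).

Lemma step_ge0 : 0 <= h.
Proof. exact: le_trans (enorm_ge0 _) hP. Qed.

Lemma enorm_rel_step : enorm (psub (psub E' P') (psub E P)) <= (1 + nu) * h.
Proof. by have := enorm_psub_psub_le E P E' P'; have := hE; have := hP; lra. Qed.

Lemma enorm_ydev_step : enorm (psub (ydev E' P') (ydev E P)) <= (al + be) * h.
Proof.
rewrite ydev_increment; apply: le_trans (enorm_vlin_le _ _ _ _) _.
rewrite normrN (ger0_norm (ltW alpha_gt0)) (ger0_norm beta_ge0).
have := ler_wpM2l (ltW alpha_gt0) hE; have := ler_wpM2l beta_ge0 hP.
have := ler_wpM2l (ltW alpha_gt0) (ler_wpM2r step_ge0 (ltW nu1)); rewrite mul1r.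
lra.
Qed.

Lemma slack_step : `|slack E' P' - slack E P| <= ga * ((1 + nu) * h).
Proof.
have -> : slack E' P' - slack E P = ga * (enorm (psub E P) - enorm (psub E' P')).
  by rewrite !slackE; ring.
rewrite normrM (gtr0_norm gamma_gt0) (ler_pM2l gamma_gt0).
apply: le_trans enorm_rel_step; rewrite ler_norml.
have h1 := enorm_psub_ge (psub E P) (psub E' P'); rewrite (enorm_psubC (psub E P)) in h1.
by have h2 := enorm_psub_ge (psub E' P') (psub E P); apply/andP; split; lra.
Qed.

Lemma lyap_step_lipschitz : h <= 1 -> lyap E' P' - lyap E P <= lyap_lip_const E' P' * h.
Proof.
move=> h1; have h0 := step_ge0.
have ydiff (y y' : R * R) : enorm (psub y' y) <= (al + be) * h ->
    enorm y' ^+ 2 - enorm y ^+ 2 <= 2 * (enorm y' * ((al + be) * h)).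
  move=> dy; have -> : enorm y' ^+ 2 - enorm y ^+ 2 =
      2 * dot y' (psub y' y) - enorm (psub y' y) ^+ 2.
    by rewrite !enorm_sqr /dot /psub /=; ring.
  have := dot_le y' (psub y' y); have := ler_wpM2l (enorm_ge0 y') dy.
  have := sqr_ge0 (enorm (psub y' y)); lra.
have adiff (a a' : R) : `|a' - a| <= ga * ((1 + nu) * h) ->
    a ^+ 2 - a' ^+ 2 <= 2 * (`|a'| * (ga * ((1 + nu) * h))) + (ga * (1 + nu)) ^+ 2 * h.
  move=> da; have -> : a ^+ 2 - a' ^+ 2 = 2 * (a' * (a - a')) + (a - a') ^+ 2 by ring.
  have g0 : 0 <= ga * (1 + nu) by apply: mulr_ge0; [exact: ltW gamma_gt0 | have := nu0; lra].
  have e1 : a' * (a - a') <= `|a'| * (ga * ((1 + nu) * h)).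
    by apply: le_trans (ler_norm _) _; rewrite normrM ler_wpM2l // distrC.
  have e2 : (a - a') ^+ 2 <= (ga * (1 + nu) * h) ^+ 2.
    have := da; rewrite ler_norml -mulrA => /andP[l1 l2].
    have X0 : 0 <= ga * (1 + nu) * h by rewrite -mulrA; lra.
    nra.
  have : (ga * (1 + nu) * h) ^+ 2 <= (ga * (1 + nu)) ^+ 2 * h.
    by rewrite exprMn ler_wpM2l ?sqr_ge0 // expr2 ler_piMr.
  lra.
have := ydiff _ _ enorm_ydev_step; have := adiff _ _ slack_step.
by rewrite /lyap /lyap_lip_const; lra.
Qed.

Lemma zP_lipschitz : 0 < enorm (psub E P) ->
  enorm (psub (zPat E' P') (zPat E P)) <= zP_lip_const E P * h.
Proof.
move=> r0; have h0 := step_ge0; have n0 := nu0; have RC0 := radiusC_gt0.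
have g0 := gamma_gt0; have a0 := alpha_gt0; have b0 := beta_ge0.
set r := psub E P; set r' := psub E' P'.
have -> : psub (zPat E' P') (zPat E P) = vadd (vadd (vscl radiusC (psub (unit_dir r') (unit_dir r)))
    (vscl (- ga) (psub r' r))) (vscl nu (psub (ydev E' P') (ydev E P))).
  by rewrite !zPatE /psub /vadd /vscl /=; congr pair; ring.
apply: le_trans (enorm_vadd_le _ _) _; apply: le_trans (lerD (enorm_vadd_le _ _) (lexx _)) _.
rewrite !enorm_vscl normrN !gtr0_norm //.
have du : enorm (psub (unit_dir r') (unit_dir r)) <= 2 * ((1 + nu) * h) / enorm r.
  apply: le_trans (unit_dir_lipschitz _ r0) _.
  apply: ler_wpM2r; first by rewrite invr_ge0 ltW.
  by apply: ler_wpM2l => //; exact: enorm_rel_step.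
have := ler_wpM2l (ltW RC0) du; have := ler_wpM2l (ltW g0) enorm_rel_step.
have := ler_wpM2l (ltW n0) enorm_ydev_step.
have -> : radiusC * (2 * ((1 + nu) * h) / enorm r) = 2 * radiusC / enorm r * (1 + nu) * h.
  by field; rewrite gt_eqF.
by rewrite /zP_lip_const -/r; lra.
Qed.

Lemma rel_sqr_step :
  enorm (psub E' P') ^+ 2 - enorm (psub E P) ^+ 2 =
  2 * dot (psub E P) (psub (psub E' P') (psub E P)) + enorm (psub (psub E' P') (psub E P)) ^+ 2.
Proof. by rewrite !enorm_sqr /dot /psub /=; ring. Qed.

Lemma slack_sqr_step : 0 < enorm (psub E P) -> h <= 1 -> slack_margin E P * h <= slack E P ->
  0 <= slack E' P' /\ slack E P ^+ 2
    - slack E P * ga * (enorm (psub E' P') ^+ 2 - enorm (psub E P) ^+ 2) / enorm (psub E P)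
    <= slack E' P' ^+ 2.
Proof.
move=> r0 h1 small; have g0 := gamma_gt0; have h0 := step_ge0; have dr := enorm_rel_step.
have grow : enorm (psub E' P') ^+ 2 - enorm (psub E P) ^+ 2 <=
    (2 * enorm (psub E P) * (1 + nu) + (1 + nu) ^+ 2) * h.
  rewrite rel_sqr_step; have := dot_le (psub E P) (psub (psub E' P') (psub E P)).
  have := ler_wpM2l (enorm_ge0 (psub E P)) dr; have := enorm_sqr_le dr.
  have hh : h ^+ 2 <= h by rewrite expr2 ler_piMr.
  by have := ler_wpM2l (sqr_ge0 (1 + nu)) hh; rewrite exprMn; lra.
rewrite !slackE; apply: slack_sqr_ge => //; [exact: enorm_ge0 | exact: ltW |].
apply: le_trans small; rewrite /slack_margin [X in _ <= X]mulrAC -[ga * _ * h]mulrA.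
apply: ler_wpM2r; first by rewrite invr_ge0; lra.
by apply: ler_wpM2l => //; exact: ltW.
Qed.

Lemma lyap_step : 0 < enorm (psub E P) -> 0 <= slack E P ->
  dot (evader_dir E P) (psub E' E) <= nu * enorm (evader_dir E P) * h ->
  (enorm (zPat E P) - 2 * zP_lip_const E P * h) * h <= dot (zPat E P) (psub P' P) ->
  h <= 1 -> slack_margin E P * h <= slack E P ->
  lyap E' P' <= lyap E P + 2 * ga * h * (enorm (evader_dir E P) - enorm (zPat E P))
                + lyap_err_const E P * h ^+ 2 /\ 0 <= slack E' P'.
Proof.
move=> r0 a0 hW hQ h1 small; have h0 := step_ge0.
have g0 := gamma_gt0; have al0 := alpha_gt0.
have [a'0 asq] := slack_sqr_step r0 h1 small; split=> //.
have fo := lyap_first_order E P E' P'; have dr := enorm_rel_step.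
rewrite rel_sqr_step in asq; move: asq fo dr a0 r0 hW hQ.
rewrite /lyap /lyap_err_const; set r := psub E P; set d := psub _ r; set a := slack E P.
clearbody r d a => asq fo dr a0 r0 hW hQ.
have hdy : enorm (psub (ydev E' P') (ydev E P)) ^+ 2 <= (al + be) ^+ 2 * h ^+ 2.
  by rewrite -exprMn; exact: enorm_sqr_le enorm_ydev_step.
have esplit : a * ga * (2 * dot r d + enorm d ^+ 2) / enorm r =
    2 * ga * (a / enorm r) * dot r d + a * ga * enorm d ^+ 2 / enorm r.
  by field; rewrite gt_eqF.
have hdd : a * ga * enorm d ^+ 2 / enorm r <= a * ga * (1 + nu) ^+ 2 / enorm r * h ^+ 2.
  have -> : a * ga * (1 + nu) ^+ 2 / enorm r * h ^+ 2 = a * ga / enorm r * ((1 + nu) * h) ^+ 2.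
    by rewrite exprMn; field; rewrite gt_eqF.
  rewrite mulrAC; apply: ler_wpM2l; last exact: enorm_sqr_le dr.
  by apply: divr_ge0; [apply: mulr_ge0 => //; exact: ltW | exact: ltW].
have hW' : 2 * al * dot (evader_dir E P) (psub E' E) <= 2 * ga * h * enorm (evader_dir E P).
  by have := ler_wpM2l (ltW al0) hW; rewrite /gamma; lra.
have hQ' := ler_wpM2l (ltW g0) hQ.
have ey : enorm (ydev E' P') ^+ 2 = enorm (ydev E P) ^+ 2
    + 2 * dot (ydev E P) (psub (ydev E' P') (ydev E P)) + enorm (psub (ydev E' P') (ydev E P)) ^+ 2.
  by rewrite !enorm_sqr /dot /psub /=; ring.
lra.
Qed.

End Step.
End Apollonius.

Section Pursuit.
Variable R : realType.
Variables (nu delta t0 T : R) (xE xP vE : R -> R * R).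
Hypotheses (nu0 : 0 < nu) (nu1 : nu < 1) (delta0 : 0 < delta).
Hypotheses (mE1 : measurable_fun [set: R] (fun s => (vE s).1))
  (mE2 : measurable_fun [set: R] (fun s => (vE s).2))
  (vEnu : forall s, enorm (vE s) <= nu)
  (trE : forall t, t0 <= t <= T -> integral_traj xE vE t0 t).
Let vP s := vP_law nu delta (xE t0) (xP t0) (xE s) (xP s).
Hypotheses (mP1 : measurable_fun `[t0, T] (fun s => (vP s).1))
  (mP2 : measurable_fun `[t0, T] (fun s => (vP s).2))
  (trP : forall t, t0 <= t <= T -> integral_traj xP vP t0 t)
  (nocap : forall s, t0 <= s < T -> xE s <> xP s).

Local Notation ga := (gamma nu).
Local Notation rho s := (enorm (psub (xE s) (xP s))).
Local Notation G s := (lyap nu delta (xE t0) (xP t0) (xE s) (xP s)).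
Local Notation A s := (slack nu delta (xE t0) (xP t0) (xE s) (xP s)).
Local Notation pE s := (evader_dir nu delta (xE t0) (xP t0) (xE s) (xP s)).
Local Notation z s := (zPat nu delta (xE t0) (xP t0) (xE s) (xP s)).
Local Notation K s := (zP_lip_const nu delta (xE t0) (xP t0) (xE s) (xP s)).

Lemma vP_unit_dir s : vP s = unit_dir (z s).
Proof. by rewrite /vP /vP_law /unit_dir /vscl /= !(mulrC _ (enorm _)^-1). Qed.

Lemma enorm_vP_le1 s : enorm (vP s) <= 1.
Proof. by rewrite vP_unit_dir enorm_unit_dir_le1. Qed.

Let mE1T : measurable_fun `[t0, T] (fun s => (vE s).1).
Proof. exact: measurable_funS mE1. Qed.
Let mE2T : measurable_fun `[t0, T] (fun s => (vE s).2).
Proof. exact: measurable_funS mE2. Qed.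
Let vEnuT s : t0 <= s <= T -> enorm (vE s) <= nu.
Proof. by move=> _; apply: vEnu. Qed.
Let vP1 s : t0 <= s <= T -> enorm (vP s) <= 1.
Proof. by move=> _; apply: enorm_vP_le1. Qed.

Lemma evader_increment s u : t0 <= s -> s < u -> u <= T ->
  enorm (psub (xE u) (xE s)) <= nu * (u - s).
Proof. by move=> t0s su uT; apply: (traj_increment_le mE1T mE2T vEnuT trE t0s su uT). Qed.

Lemma pursuer_increment s u : t0 <= s -> s < u -> u <= T ->
  enorm (psub (xP u) (xP s)) <= u - s.
Proof.
by move=> t0s su uT; rewrite -[u - s]mul1r; apply: (traj_increment_le mP1 mP2 vP1 trP t0s su uT).
Qed.

Lemma rho_gt0 s : t0 <= s < T -> 0 < rho s.
Proof.
move=> /nocap; rewrite lt_def enorm_ge0 andbT enorm_eq0 /psub xpair_eqE !subr_eq0.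
case: (xE s) (xP s) => a b [c d] /= neq; apply/negP => /andP[/eqP ac /eqP bd].
by apply: neq; rewrite ac bd.
Qed.

Lemma evader_work s u : t0 <= s -> s < u -> u <= T ->
  dot (pE s) (psub (xE u) (xE s)) <= nu * enorm (pE s) * (u - s).
Proof.
move=> t0s su uT; apply: (traj_dot_increment_le mE1T mE2T vEnuT trE t0s su uT) => y _.
by apply: le_trans (dot_le _ _) _; rewrite mulrC ler_wpM2r ?enorm_ge0.
Qed.

Lemma pursuer_work s u : t0 <= s < T -> s < u -> u <= T ->
  (enorm (z s) - 2 * K s * (u - s)) * (u - s) <= dot (z s) (psub (xP u) (xP s)).
Proof.
move=> /[dup] hs /andP[t0s sT] su uT.
apply: (traj_dot_increment_ge mP1 mP2 vP1 trP t0s su uT) => y /andP[sy yu].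
have yT := le_trans yu uT.
rewrite vP_unit_dir; apply: le_trans _ (dot_unit_dir_ge _ _); rewrite enorm_psubC.
have := zP_lipschitz (xE t0) (xP t0) nu0 nu1 delta0 (evader_increment t0s sy yT)
  (pursuer_increment t0s sy yT) (rho_gt0 hs).
have := ler_wpM2l (zP_lip_const_ge0 (xE t0) (xP t0) nu0 nu1 delta0 (rho_gt0 hs))
  (_ : y - s <= u - s); lra.
Qed.

Lemma lyap_decreases_locally s : t0 <= s < T -> G s < 0 -> 0 <= A s ->
  exists2 e, 0 < e & forall u, s < u <= T -> u - s < e -> G u < G s /\ 0 <= A u.
Proof.
move=> /[dup] hs /andP[t0s sT] Gneg A0; have r0 := rho_gt0 hs.
have gap : 0 < 2 * ga * (enorm (z s) - enorm (pE s)).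
  apply: mulr_gt0; first by rewrite mulr_gt0 ?gamma_gt0.
  by rewrite subr_gt0; apply: (evader_dir_lt_zP (E0 := xE t0) (P0 := xP t0) nu0 nu1 r0).
pose C := lyap_err_const nu delta (xE t0) (xP t0) (xE s) (xP s).
have [e1 e10 He1] := linear_lt_near0 (1 : R) ltr01.
have [e2 e20 He2] := linear_lt_near0 (slack_margin nu (xE s) (xP s))
  (slack_gt0 (E0 := xE t0) (P0 := xP t0) Gneg A0).
have [e3 e30 He3] := linear_lt_near0 C gap.
exists (Num.min e1 (Num.min e2 e3)) => [|u /andP[su uT]]; first by rewrite !lt_min e10 e20 e30.
rewrite !lt_min => /and3P[he1 he2 he3]; have h0 : 0 <= u - s by rewrite subr_ge0 ltW.
have h1 : u - s <= 1 by have := He1 _ h0 he1; rewrite mul1r => /ltW.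
have [Gu Au] := lyap_step nu0 nu1 (evader_increment t0s su uT) (pursuer_increment t0s su uT)
  r0 A0 (evader_work t0s su uT) (pursuer_work hs su uT) h1 (ltW (He2 _ h0 he2)).
split=> //; apply: le_lt_trans Gu _; rewrite -/C.
have := He3 _ h0 he3; have : 0 < u - s by rewrite subr_gt0.
by clearbody C; nra.
Qed.

Lemma lyap_left_lipschitz s u : t0 <= u -> u < s -> s <= T -> s - u <= 1 ->
  G s - G u <= lyap_lip_const nu delta (xE t0) (xP t0) (xE s) (xP s) * (s - u).
Proof.
move=> t0u us sT; apply: (lyap_step_lipschitz delta (xE t0) (xP t0) nu0 nu1).
- exact: evader_increment.
- exact: pursuer_increment.
Qed.

Lemma slack_left_lipschitz s u : t0 <= u -> u < s -> s <= T ->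
  - A s - - A u <= ga * (1 + nu) * (s - u).
Proof.
move=> t0u us sT; rewrite -mulrA; apply: le_trans (ler_norm _) _; rewrite distrC opprK addrC.
by apply: (slack_step delta (xE t0) (xP t0) nu0 nu1);
  [exact: evader_increment | exact: pursuer_increment].
Qed.

Lemma lyap_nonincreasing s : t0 <= s <= T -> G s < 0 -> 0 <= A s ->
  forall t, s <= t <= T -> G t <= G s /\ 0 <= A t.
Proof.
move=> /andP[t0s sT] Gs0 As0.
apply: real_induction => //= [x /andP[sx xT] [Gx Ax]|x /andP[sx xT] below].
  have hx : t0 <= x < T by rewrite (le_trans t0s sx) xT.
  have [e e0 He] := lyap_decreases_locally hx (le_lt_trans Gx Gs0) Ax.
  exists e => // u hu hue; have [Gu Au] := He u hu hue; split=> //; exact: ltW (lt_le_trans Gu Gx).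
have t0u u : s <= u -> t0 <= u := le_trans t0s.
split.
  pose M := lyap_lip_const nu delta (xE t0) (xP t0) (xE x) (xP x).
  apply: (left_lipschitz_ub (f := fun y => G y) (M := M) sx) => [u /andP[su ux] ux1|u /below[] //].
  exact: lyap_left_lipschitz (t0u _ su) ux xT ux1.
rewrite -oppr_le0; apply: (left_lipschitz_ub (f := fun y => - A y) (M := ga * (1 + nu)) sx).
  by move=> u /andP[su ux] _; exact: slack_left_lipschitz (t0u _ su) ux xT.
by move=> u /below[_]; rewrite oppr_le0.
Qed.

Lemma slack_gt_delta t : t0 < t <= T -> delta < A t.
Proof.
move=> /andP[t0t tT]; have ht0 : t0 <= t0 < T by rewrite lexx (lt_le_trans t0t tT).
have A0 : A t0 = delta by rewrite /slack /radiusC; ring.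
have G0 : G t0 = - delta ^+ 2.
  rewrite /lyap A0 (_ : ydev _ _ _ (xE t0) (xP t0) = (0, 0)); last by rewrite /ydev /psub !subrr.
  by rewrite /enorm /= expr0n addr0 sqrtr0 expr0n sub0r.
have [e e0 He] : exists2 e, 0 < e & forall u, t0 < u <= T -> u - t0 < e -> G u < G t0 /\ 0 <= A u.
  apply: lyap_decreases_locally ht0 _ _; last by rewrite A0 ltW.
  by rewrite G0 oppr_lt0 exprn_gt0.
pose u1 := t0 + Num.min e (t - t0) / 2.
have m0 : 0 < Num.min e (t - t0) by rewrite lt_min e0 subr_gt0.
have [m1 m2] : Num.min e (t - t0) <= e /\ Num.min e (t - t0) <= t - t0.
  by rewrite !ge_min !lexx orbT.
have [Gu1 Au1] : G u1 < G t0 /\ 0 <= A u1 by apply: He; rewrite /u1; [apply/andP; split|]; lra.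
have [Gt At] : G t <= G u1 /\ 0 <= A t.
  apply: lyap_nonincreasing => //; last by apply/andP; split; rewrite /u1; lra.
    by apply/andP; split; rewrite /u1; lra.
  by rewrite (lt_trans Gu1) // G0 oppr_lt0 exprn_gt0.
have := lyap_ge nu delta (xE t0) (xP t0) (xE t) (xP t); rewrite G0 in Gu1 => hA.
have : delta ^+ 2 < A t ^+ 2 by lra.
by rewrite ltr_pXn2r // nnegrE ltW.
Qed.

Lemma dist_lt_initial t : t0 < t <= T -> rho t < rho t0.
Proof.
move=> /slack_gt_delta; rewrite slackE /radiusC /apollo_radius => h.
by rewrite -(ltr_pM2l (gamma_gt0 nu0 nu1)); lra.
Qed.

End Pursuit.

Theorem lemma1 (R : realType) (nu delta t0 T : R) (xE xP vE : R -> R * R) :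
  0 < nu -> nu < 1 -> 0 < delta ->
  xE t0 <> xP t0 ->
  (* admissible evader control: measurable, ||v_E|| <= nu *)
  measurable_fun [set: R] (fun s => (vE s).1) ->
  measurable_fun [set: R] (fun s => (vE s).2) ->
  (forall s, enorm (vE s) <= nu) ->
  (* evader dynamics on [t0, T] *)
  (forall t, t0 <= t <= T -> integral_traj xE vE t0 t) ->
  (* pursuer dynamics on [t0, T] under the law v_P = z_P / ||z_P|| *)
  let vP := fun s => vP_law nu delta (xE t0) (xP t0) (xE s) (xP s) in
  measurable_fun `[t0, T] (fun s => (vP s).1) ->
  measurable_fun `[t0, T] (fun s => (vP s).2) ->
  (forall t, t0 <= t <= T -> integral_traj xP vP t0 t) ->
  (* no capture strictly before T *)
  (forall s, t0 <= s < T -> xE s <> xP s) ->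
  forall t, t0 < t <= T ->
    enorm (psub (xE t) (xP t)) < enorm (psub (xE t0) (xP t0)) /\
    (forall rho : R, enorm (psub (xE t0) (xP t0)) <= rho ->
       enorm (psub (xE t) (xP t)) <= rho).
Proof.
(* [xE t0 <> xP t0] is implied by the no-capture hypothesis at [s = t0]. *)
move=> nu0 nu1 delta0 _ mE1 mE2 vEnu trE vP mP1 mP2 trP nocap t ht.
have shrinks := dist_lt_initial nu0 nu1 delta0 mE1 mE2 vEnu trE mP1 mP2 trP nocap ht.
by split=> // rho /(lt_le_trans shrinks)/ltW.
Qed.
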